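(* Let $K$ be a field, $b\ge2$ an integer, and $M=(m_{i,j})_{i,j\ge0}$ a non-degenerate $b$-autosimilar infinite matrix over $K$. Set $d_0=1$ and $d_k=\det(M(k+1))/\det(M(k))$ for $k=1,\dots,b-1$. Then for every $n\ge1$, $$\det(M(n))=\prod_{k=0}^{n-1}\ \prod_i d_{\kappa_i},$$ where $k=\sum_i\kappa_ib^i$ is the base-$b$ expansion of $k$ (digits $\kappa_i\in\{0,\dots,b-1\}$).
   Context: An infinite matrix $M=(m_{i,j})_{i,j\ge0}$ is $b$-autosimilar if $m_{0,0}=1$ and $m_{s,t}=\prod_i m_{\sigma_i,\tau_i}$ whenever $s=\sum_i\sigma_ib^i$, $t=\sum_i\tau_ib^i$ are base-$b$ expansions. $M(n)$ denotes the submatrix $(m_{i,j})_{0\le i,j<n}$. $M$ is non-degenerate if $\det(M(n))\neq0$ for $n=2,\dots,b$. *)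

From mathcomp Require Import all_boot all_algebra.
Set Implicit Arguments. Unset Strict Implicit. Unset Printing Implicit Defensive.
Import GRing.Theory.
Local Open Scope ring_scope.

Definition digit (b i s : nat) : nat := ((s %/ b ^ i) %% b)%N.

Definition subM (K : fieldType) (m : nat -> nat -> K) (n : nat) : 'M[K]_n :=
  \matrix_(i < n, j < n) m i j.

(* Digits of index > maxn s t are all 0 (since b >= 2), so indices
   i <= maxn s t cover the base-b expansions of both s and t
   (the extra factors are m 0 0 = 1). *)
Definition b_autosimilar (K : fieldType) (b : nat) (m : nat -> nat -> K) : Prop :=
  m 0%N 0%N = 1 /\
  forall s t : nat,
    m s t = \prod_(i < (maxn s t).+1) m (digit b i s) (digit b i t).

Definition b_nondegenerate (K : fieldType) (b : nat) (m : nat -> nat -> K) : Prop :=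
  forall n : nat, (2 <= n <= b)%N -> \det (subM m n) != 0.

Definition dcoef (K : fieldType) (m : nat -> nat -> K) (k : nat) : K :=
  if k == 0%N then 1 else \det (subM m k.+1) / \det (subM m k).

From mathcomp Require Import all_boot all_algebra.
Import GRing.Theory.
Set Implicit Arguments. Unset Strict Implicit. Unset Printing Implicit Defensive.
Local Open Scope ring_scope.

(* The leading minors of M(b) are nonzero, so M(b) = L U with L unit lower
   triangular and U upper triangular, and the diagonal of U is d_0, ..., d_(b-1).
   Autosimilarity says that M(b^N) is the N-fold Kronecker power of M(b); by the
   mixed-product rule it factors as L^(x N) U^(x N), again unit lower times upper
   triangular.  Hence det M(n), for n <= b^N, is the product of the first n
   diagonal entries of U^(x N), and the k-th of them is the product of the
   d_(kappa_i) over the base-b digits kappa_i of k. *)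

Section LeadingMinors.
Variable K : fieldType.
Implicit Types (a L U : nat -> nat -> K) (n k : nat).

Definition LU_decomposition n a L U : Prop :=
  [/\ forall x y, (x < n)%N -> (y < n)%N -> a x y = \sum_(c < n) L x c * U c y,
      forall x, (x < n)%N -> L x x = 1,
      forall x y, (x < y < n)%N -> L x y = 0
    & forall x y, (y < x < n)%N -> U x y = 0].

Lemma subM_tr a n : subM (fun x y => a y x) n = (subM a n)^T.
Proof. by apply/matrixP => i j; rewrite !mxE. Qed.

Lemma det_subM_lower L k : (forall x y, (x < y < k)%N -> L x y = 0) ->
  \det (subM L k) = \prod_(c < k) L c c.
Proof.
move=> L0; rewrite det_trig; first by apply: eq_bigr => i _; rewrite mxE.
by apply/is_trig_mxP => i j lt_ij; rewrite mxE L0 // lt_ij ltn_ord.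
Qed.

Lemma det_subM_upper U k : (forall x y, (y < x < k)%N -> U x y = 0) ->
  \det (subM U k) = \prod_(c < k) U c c.
Proof. by move=> U0; rewrite -det_tr -subM_tr det_subM_lower // => x y /U0. Qed.

Lemma subM_mul n a L U k :
  (forall x y, (x < n)%N -> (y < n)%N -> a x y = \sum_(c < n) L x c * U c y) ->
  (forall x y, (x < y < n)%N -> L x y = 0) -> (k <= n)%N ->
  subM a k = subM L k *m subM U k.
Proof.
move=> a_LU L0 le_kn; apply/matrixP => i j.
have lt_in := leq_trans (ltn_ord i) le_kn; have lt_jn := leq_trans (ltn_ord j) le_kn.
rewrite !mxE a_LU // -(big_mkord xpredT (fun c => L i c * U c j)).
rewrite (big_cat_nat (leq0n k) le_kn) /= big_mkord.
rewrite [X in _ + X]big1_seq ?addr0 => [|c]; first by apply: eq_bigr => c _; rewrite !mxE.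
rewrite mem_index_iota => /andP[_ /andP[le_kc lt_cn]].
by rewrite L0 ?mul0r // lt_cn andbT (leq_trans (ltn_ord i)).
Qed.

Lemma det_subM_LU n a L U k : LU_decomposition n a L U -> (k <= n)%N ->
  \det (subM a k) = \prod_(c < k) U c c.
Proof.
move=> [a_LU L1 L0 U0] le_kn.
rewrite (subM_mul a_LU L0 le_kn) det_mulmx det_subM_lower => [|x y /andP[lt_xy lt_yk]].
  rewrite det_subM_upper => [|x y /andP[lt_yx lt_xk]].
    by rewrite big1 ?mul1r // => c _; rewrite L1 // (leq_trans (ltn_ord c)).
  by rewrite U0 // lt_yx (leq_trans lt_xk).
by rewrite L0 // lt_xy (leq_trans lt_yk).
Qed.

Lemma LU_decomposition_diag n a L U c : LU_decomposition n a L U -> (c < n)%N ->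
  \det (subM a c) != 0 -> U c c = \det (subM a c.+1) / \det (subM a c).
Proof.
move=> LU lt_cn; rewrite (det_subM_LU LU lt_cn) (det_subM_LU LU (ltnW lt_cn)).
by rewrite big_ord_recr /= => nz; rewrite mulrAC divff ?mul1r.
Qed.

Lemma solve_subM a n (v : nat -> K) : \det (subM a n) != 0 ->
  exists w : nat -> K, forall x, (x < n)%N -> \sum_(c < n) a x c * w c = v x.
Proof.
rewrite -unitfE -unitmxE => a_unit.
pose W := invmx (subM a n) *m \col_(i < n) v i.
exists (fun c => oapp (fun i : 'I_n => W i 0) 0 (insub c)) => x lt_xn.
have /matrixP/(_ (Ordinal lt_xn) 0) := mulKVmx a_unit (\col_(i < n) v i).
by rewrite !mxE => <-; apply: eq_bigr => c _; rewrite valK /= [subM _ _ _ _]mxE.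
Qed.

Lemma solve_subM_tr a n (v : nat -> K) : \det (subM a n) != 0 ->
  exists w : nat -> K, forall y, (y < n)%N -> \sum_(c < n) w c * a c y = v y.
Proof.
rewrite -det_tr -subM_tr => /(solve_subM v) [w aw].
by exists w => y lt_yn; rewrite -aw //; apply: eq_bigr => c _; rewrite mulrC.
Qed.

Lemma LU_decomposition_exists n a : (forall k, (k < n)%N -> \det (subM a k) != 0) ->
  exists L U, LU_decomposition n a L U.
Proof.
elim: n => [|n IH] minors_nz.
  exists (fun x y => (x == y)%:R), (fun _ _ => 0).
  by split=> x; rewrite ?ltn0 // => y; rewrite andbF.
have [L [U LU]] := IH (fun k lt_kn => minors_nz k (ltnW lt_kn)).
have L_nz : \det (subM L n) != 0.
  case: LU => _ L1 L0 _; rewrite det_subM_lower // big1 ?oner_neq0 // => c _.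
  exact: L1.
have U_nz : \det (subM U n) != 0.
  case: (LU) => _ _ _ U0; rewrite det_subM_upper // -(det_subM_LU LU) //.
  exact: minors_nz.
have [u Lu] := solve_subM (fun x => a x n) L_nz.
have [l lU] := solve_subM_tr (a n) U_nz.
(* Bordering: the new row l of L and column u of U solve triangular systems,
   and the new pivot d is the Schur complement. *)
pose d := a n n - \sum_(c < n) l c * u c.
exists (fun x y => if y == n then (x == n)%:R else if x == n then l y else L x y).
exists (fun x y => if x == n then (y == n)%:R * d else if y == n then u x else U x y).
case: LU => a_LU L1 L0 U0; split.
- move=> x y; rewrite !ltnS big_ord_recr /= !eqxx.
  under eq_bigr => c _ do rewrite (ltn_eqF (ltn_ord c)).
  rewrite leq_eqVlt => /predU1P[-> | lt_xn]; rewrite leq_eqVlt => /predU1P[-> | lt_yn].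
  + by rewrite !eqxx !mul1r addrCA subrr addr0.
  + by rewrite eqxx (ltn_eqF lt_yn) mul0r mulr0 addr0 lU.
  + by rewrite eqxx (ltn_eqF lt_xn) mul0r addr0 Lu.
  + by rewrite (ltn_eqF lt_xn) (ltn_eqF lt_yn) mul0r addr0 a_LU.
- move=> x; rewrite ltnS leq_eqVlt => /predU1P[-> | lt_xn]; first by rewrite eqxx.
  by rewrite (ltn_eqF lt_xn) L1.
- move=> x y; rewrite ltnS [(y <= n)%N]leq_eqVlt => /andP[lt_xy /predU1P[eq_yn | lt_yn]].
    by subst y; rewrite eqxx (ltn_eqF lt_xy).
  by rewrite (ltn_eqF lt_yn) (ltn_eqF (ltn_trans lt_xy lt_yn)) L0 // lt_xy.
- move=> x y; rewrite ltnS [(x <= n)%N]leq_eqVlt => /andP[lt_yx /predU1P[eq_xn | lt_xn]].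
    by subst x; rewrite eqxx (ltn_eqF lt_yx) mul0r.
  by rewrite (ltn_eqF lt_xn) (ltn_eqF (ltn_trans lt_yx lt_xn)) U0 // lt_yx.
Qed.

End LeadingMinors.

Lemma sum_ord_mul (V : nmodType) (F : nat -> V) p q :
  \sum_(r < p * q) F r = \sum_(i < p) \sum_(c < q) F (i * q + c)%N.
Proof.
rewrite -(big_mkord xpredT F) -(big_mkord xpredT (fun i => \sum_(c < q) F (i * q + c)%N)).
rewrite big_nat_mul; apply: eq_bigr => i _.
rewrite -{1}[(i * q)%N]add0n big_addn mulSn addnK big_mkord.
by apply: eq_bigr => c _; rewrite addnC.
Qed.

Lemma digit_eq0 b N i s : (0 < b)%N -> (N <= i)%N -> (s < b ^ N)%N -> digit b i s = 0%N.
Proof.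
move=> b_gt0 le_Ni lt_s; rewrite /digit divn_small ?mod0n //.
exact: leq_trans lt_s (leq_pexp2l b_gt0 le_Ni).
Qed.

Lemma prod_ord_pad (R : comPzSemiRingType) (F : nat -> R) N N' :
  (N <= N')%N -> (forall i, (N <= i)%N -> F i = 1) ->
  \prod_(i < N') F i = \prod_(i < N) F i.
Proof.
move=> le_NN' F1; rewrite [RHS](big_ord_widen _ _ le_NN') [RHS]big_mkcond /=.
by apply: eq_bigr => i _; case: ltnP => // /F1.
Qed.

Section KroneckerPower.
Variables (K : fieldType) (b : nat).
Hypothesis b_gt0 : (0 < b)%N.
Implicit Types (f L U : nat -> nat -> K) (N s t : nat).

(* Entry (s, t) of the N-fold Kronecker power of the b x b matrix f. *)
Definition kronpow N f s t : K := \prod_(i < N) f (digit b i s) (digit b i t).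

Lemma kronpowS N f s t :
  kronpow N.+1 f s t = f (s %% b)%N (t %% b)%N * kronpow N f (s %/ b)%N (t %/ b)%N.
Proof.
rewrite /kronpow big_ord_recl /digit expn0 !divn1; congr (_ * _).
by apply: eq_bigr => i _; rewrite /= expnS !divnMA.
Qed.

Lemma kronpow_pad N N' f s t : f 0%N 0%N = 1 -> (N <= N')%N ->
  (s < b ^ N)%N -> (t < b ^ N)%N -> kronpow N' f s t = kronpow N f s t.
Proof.
move=> f00 le_NN' lt_s lt_t.
rewrite /kronpow (prod_ord_pad (F := fun i => f (digit b i s) (digit b i t)) le_NN') //.
by move=> i le_Ni; rewrite !(digit_eq0 b_gt0 le_Ni).
Qed.

Lemma kronpow_diag N f s : (forall x, (x < b)%N -> f x x = 1) -> kronpow N f s s = 1.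
Proof. by move=> f1; apply: big1 => i _; rewrite f1 ?ltn_pmod. Qed.

Lemma kronpow_lower N f s t : (forall x y, (x < y < b)%N -> f x y = 0) ->
  (s < t < b ^ N)%N -> kronpow N f s t = 0.
Proof.
move=> f0; elim: N s t => [|N IH] s t /andP[lt_st].
  by rewrite expn0 ltnS leqn0 => /eqP t0; rewrite t0 in lt_st.
rewrite kronpowS expnSr => lt_t.
have [eq_q|lt_q] := eqVneq (s %/ b)%N (t %/ b)%N.
  rewrite f0 ?mul0r // ltn_pmod // andbT.
  by move: lt_st; rewrite {1}(divn_eq s b) {1}(divn_eq t b) eq_q ltn_add2l.
rewrite IH ?mulr0 // ltn_neqAle lt_q leq_div2r ?ltn_divLR ?(ltnW lt_st) //.
Qed.

Lemma kronpow_mul N f L U :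
  (forall x y, (x < b)%N -> (y < b)%N -> f x y = \sum_(c < b) L x c * U c y) ->
  forall s t, (s < b ^ N)%N -> (t < b ^ N)%N ->
  kronpow N f s t = \sum_(r < b ^ N) kronpow N L s r * kronpow N U r t.
Proof.
move=> f_LU; elim: N => [|N IH] s t lt_s lt_t.
  by rewrite expn0 big_ord1 /kronpow !big_ord0 mulr1.
rewrite expnSr in lt_s lt_t.
rewrite kronpowS f_LU ?ltn_pmod // IH ?ltn_divLR // big_distrl /=.
rewrite expnSr (sum_ord_mul (fun r => kronpow N.+1 L s r * kronpow N.+1 U r t)).
rewrite exchange_big; apply: eq_bigr => c _.
rewrite big_distrr; apply: eq_bigr => q _ /=.
have lt_cb := ltn_ord c.
rewrite !kronpowS modnMDl divnMDl // (modn_small lt_cb) (divn_small lt_cb) addn0.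
by rewrite mulrACA.
Qed.

Lemma LU_decomposition_kronpow N a L U : LU_decomposition b a L U ->
  LU_decomposition (b ^ N) (kronpow N a) (kronpow N L) (kronpow N U).
Proof.
case=> a_LU L1 L0 U0; split.
- exact: kronpow_mul.
- by move=> x _; apply: kronpow_diag.
- by move=> x y; apply: kronpow_lower.
- by move=> x y; apply: (kronpow_lower (f := fun x y => U y x)) => x' y' /U0.
Qed.

End KroneckerPower.

Lemma autosimilar_kronpow (K : fieldType) b (m : nat -> nat -> K) N s t :
  (1 < b)%N -> b_autosimilar b m -> (s < b ^ N)%N -> (t < b ^ N)%N ->
  m s t = kronpow b N m s t.
Proof.
move=> b_gt1 [m00 m_digits] lt_s lt_t; have b_gt0 := ltnW b_gt1.
have lt_max x : (x <= maxn s t)%N -> (x < b ^ (maxn s t).+1)%N.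
  by move=> le_x; rewrite (leq_trans (ltn_expl x b_gt1)) // leq_pexp2l // ltnW.
rewrite m_digits -/(kronpow b _ m s t).
rewrite -(kronpow_pad b_gt0 m00 (leq_maxl _ N)) ?lt_max ?leq_maxl ?leq_maxr //.
by rewrite (kronpow_pad b_gt0 m00 (leq_maxr _ N)).
Qed.

Lemma dcoefE (K : fieldType) (m : nat -> nat -> K) k : m 0%N 0%N = 1 ->
  dcoef m k = \det (subM m k.+1) / \det (subM m k).
Proof. by case: k => [|k] m00 //; rewrite det_mx00 det_mx11 mxE m00 divr1. Qed.

Theorem corollary2p2 (K : fieldType) (b : nat) (m : nat -> nat -> K) :
  (2 <= b)%N -> b_autosimilar b m -> b_nondegenerate b m ->
  forall n : nat, (1 <= n)%N ->
    \det (subM m n) =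
      \prod_(k < n) \prod_(i < k.+1) dcoef m (digit b i k).
Proof.
move=> b_ge2 autosim nondeg n _; have [m00 _] := autosim; have b_gt0 := ltnW b_ge2.
have minors_nz k : (k < b)%N -> \det (subM m k) != 0.
  case: k => [|[|k]] lt_kb; first by rewrite det_mx00 oner_neq0.
    by rewrite det_mx11 mxE m00 oner_neq0.
  by apply: nondeg; rewrite /= ltnW.
have [L [U LU]] := LU_decomposition_exists minors_nz.
have U_dcoef c : (c < b)%N -> U c c = dcoef m c.
  by move=> lt_cb; rewrite dcoefE // (LU_decomposition_diag LU) ?minors_nz // ltnW.
have lt_n := ltn_expl n b_ge2.
have -> : subM m n = subM (kronpow b n m) n.
  apply/matrixP => i j; rewrite !mxE.
  by rewrite (autosimilar_kronpow b_ge2 autosim (ltn_trans _ lt_n) (ltn_trans _ lt_n)).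
rewrite (det_subM_LU (LU_decomposition_kronpow b_gt0 n LU) (ltnW lt_n)).
apply: eq_bigr => c _; rewrite /kronpow.
under eq_bigr => i _ do rewrite U_dcoef ?ltn_pmod //.
rewrite (prod_ord_pad (F := fun i => dcoef m (digit b i c)) (ltn_ord c)) // => i le_ci.
by rewrite (digit_eq0 b_gt0 le_ci) // ltnW // ltn_expl.
Qed.
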